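(* Let $Q$ be a faithful quandle, $S$ a set and $\theta:Q\times Q\to\mathrm{Sym}_S$ a quandle cocycle. Then $Q\times_\theta S\cong Q\times_{\mathbf{1}}S$ if and only if $\theta$ is cohomologous to the trivial cocycle $\mathbf{1}$.
   Context: A quandle is a set $Q$ with a binary operation $*$ such that every left translation $L_x:y\mapsto x*y$ is bijective, $x*(y*z)=(x*y)*(x*z)$ and $x*x=x$. $Q$ is faithful if $L_x=L_y$ implies $x=y$. A quandle cocycle with values in $\mathrm{Sym}_S$ is $\theta:Q\times Q\to\mathrm{Sym}_S$ with $\theta_{x*y,x*z}\theta_{x,z}=\theta_{x,y*z}\theta_{y,z}$ and $\theta_{x,x}=1$; $\theta$ is cohomologous to $\mathbf{1}$ (the cocycle constantly equal to the identity) if there is $\gamma:Q\to\mathrm{Sym}_S$ with $\theta_{x,y}=\gamma_{x*y}\gamma_y^{-1}$ for all $x,y$. $Q\times_\theta S$ is the quandle on $Q\times S$ with $(x,a)*(y,b)=(x*y,\theta_{x,y}(b))$. *)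

From mathcomp Require Import ssreflect ssrfun ssrbool.
Set Implicit Arguments. Unset Strict Implicit. Unset Printing Implicit Defensive.

Definition is_quandle (Q : Type) (op : Q -> Q -> Q) : Prop :=
  [/\ (forall x : Q, bijective (op x)),
      (forall x y z : Q, op x (op y z) = op (op x y) (op x z))
    & (forall x : Q, op x x = x)].

Definition faithful_quandle (Q : Type) (op : Q -> Q -> Q) : Prop :=
  forall x y : Q, op x =1 op y -> x = y.

Definition is_cocycle (Q S : Type) (op : Q -> Q -> Q) (theta : Q -> Q -> S -> S)
  : Prop :=
  [/\ (forall x y : Q, bijective (theta x y)),
      (forall x y z : Q,
         theta (op x y) (op x z) \o theta x z =1 theta x (op y z) \o theta y z)
    & (forall x : Q, theta x x =1 id)].

Definition triv_cocycle (Q S : Type) : Q -> Q -> S -> S := fun _ _ => id.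

Definition cohomologous_to_trivial (Q S : Type) (op : Q -> Q -> Q)
  (theta : Q -> Q -> S -> S) : Prop :=
  exists (gamma gammainv : Q -> S -> S),
    [/\ (forall x : Q, cancel (gamma x) (gammainv x)),
        (forall x : Q, cancel (gammainv x) (gamma x))
      & (forall x y : Q, theta x y =1 gamma (op x y) \o gammainv y)].

Definition ext_op (Q S : Type) (op : Q -> Q -> Q) (theta : Q -> Q -> S -> S)
  (p q : Q * S) : Q * S :=
  (op p.1 q.1, theta p.1 q.1 q.2).

Definition quandle_isomorphic (A B : Type) (opA : A -> A -> A) (opB : B -> B -> B)
  : Prop :=
  exists f : A -> B, bijective f /\ forall p q : A, f (opA p q) = opB (f p) (f q).

From mathcomp Require Import ssreflect ssrfun ssrbool.

(* A bijective morphism conjugates left translations, so it preserves the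
   relation "L_p = L_q". In Q x_theta S with Q faithful, L_(x,a) = L_(y,b)
   exactly when x = y, so an isomorphism f : Q x_theta S -> Q x_1 S maps the
   fibres {x} x S onto fibres. The second component of f restricted to the
   fibre over x is then a bijection gamma_x^-1 of S, and comparing second
   components in f((x,b) * (y,b)) = f(x,b) * f(y,b) gives
   gamma_(x*y)^-1 theta_(x,y) = gamma_y^-1. Conversely such a gamma yields the
   isomorphism (x,a) |-> (x, gamma_x^-1 a). *)

Set Implicit Arguments.
Unset Strict Implicit.
Unset Printing Implicit Defensive.

Section MorphismTranslation.

Variables (A B : Type) (opA : A -> A -> A) (opB : B -> B -> B) (f : A -> B).
Hypotheses (f_bij : bijective f)
  (f_morph : forall p q : A, f (opA p q) = opB (f p) (f q)).

Lemma morph_translation_eq (p q : A) : opA p =1 opA q <-> opB (f p) =1 opB (f q).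
Proof.
have [g fK gK] := f_bij.
split=> e r; first by rewrite -[r]gK -!f_morph e.
by apply: (bij_inj f_bij); rewrite !f_morph e.
Qed.

End MorphismTranslation.

Section Extension.

Variables (Q S : Type) (op : Q -> Q -> Q).

Lemma ext_iso_triv_of_cohomologous (theta : Q -> Q -> S -> S) :
  cohomologous_to_trivial op theta ->
  quandle_isomorphic (ext_op op theta) (ext_op op (@triv_cocycle Q S)).
Proof.
move=> [gamma [gammainv [gK gKi theta_eq]]].
exists (fun p => (p.1, gammainv p.1 p.2)); split.
  by exists (fun p => (p.1, gamma p.1 p.2)) => [[x a]|[x a]] /=; rewrite ?gK ?gKi.
by move=> [x a] [y b]; rewrite /ext_op /triv_cocycle /= theta_eq /= gK.
Qed.

Hypothesis hF : faithful_quandle op.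

Lemma ext_op_translation_eq (theta : Q -> Q -> S -> S) (p q : Q * S) :
  ext_op op theta p =1 ext_op op theta q <-> p.1 = q.1.
Proof.
split=> [e | e r]; last by rewrite /ext_op e.
by apply: hF => z; case: (e (z, p.2)).
Qed.

Lemma ext_iso_fst_eq (theta theta' : Q -> Q -> S -> S) (f : Q * S -> Q * S) :
    bijective f ->
    (forall p q, f (ext_op op theta p q) = ext_op op theta' (f p) (f q)) ->
  forall p q, (f p).1 = (f q).1 <-> p.1 = q.1.
Proof.
move=> f_bij f_morph p q.
apply: iff_trans (iff_sym (ext_op_translation_eq theta' _ _)) _.
apply: iff_trans (iff_sym (morph_translation_eq f_bij f_morph p q)) _.
exact: ext_op_translation_eq.
Qed.

Lemma cohomologous_of_ext_iso_triv (theta : Q -> Q -> S -> S) :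
  quandle_isomorphic (ext_op op theta) (ext_op op (@triv_cocycle Q S)) ->
  cohomologous_to_trivial op theta.
Proof.
move=> [f [f_bij f_morph]]; have [g fK gK] := f_bij.
have fst_eq := ext_iso_fst_eq f_bij f_morph.
pose gammainv x b := (f (x, b)).2.
(* [c] itself locates the image fibre: S has no distinguished element. *)
pose gamma x c := (g ((f (x, c)).1, c)).2.
have g_fibre x c : (g ((f (x, c)).1, c)).1 = x.
  by apply/(fst_eq _ (x, c)); rewrite gK.
have gammaK x : cancel (gammainv x) (gamma x).
  move=> b; rewrite /gamma /gammainv.
  have -> : (f (x, (f (x, b)).2)).1 = (f (x, b)).1 by apply/fst_eq.
  by rewrite -surjective_pairing fK.
exists gamma, gammainv; split=> // [x c | x y b /=].
  rewrite /gammainv /gamma; set p := g _.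
  have -> : (x, p.2) = p by rewrite {2}[p]surjective_pairing g_fibre.
  by rewrite /p gK.
have gammainv_theta : gammainv (op x y) (theta x y b) = gammainv y b.
  by rewrite /gammainv -[(op x y, _)]/(ext_op op theta (x, b) (y, b)) f_morph.
by rewrite -gammainv_theta gammaK.
Qed.

End Extension.

Theorem lemma2p5 (Q S : Type) (op : Q -> Q -> Q) (theta : Q -> Q -> S -> S)
  (hQ : is_quandle op) (hF : faithful_quandle op) (htheta : is_cocycle op theta) :
  quandle_isomorphic (ext_op op theta) (ext_op op (@triv_cocycle Q S))
  <-> cohomologous_to_trivial op theta.
Proof.
split; first exact: cohomologous_of_ext_iso_triv.
exact: ext_iso_triv_of_cohomologous.
Qed.
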